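(* Let $n=2m+2$ with $m\ge0$, let $a,b,c,d\in\mathbb{C}$, and suppose $T_n$ (degree $n$) and $U_{n-2}$ (degree at most $n-2$) satisfy $T_n^2-HU_{n-2}^2=1$ with $$T_n(z)=1-\frac{2(z-c)(z-d)\prod_{j=1}^m(z-x_j)^2}{(a-c)(a-d)\prod_{j=1}^m(a-x_j)^2}=-1+\frac{2(z-a)(z-b)\prod_{j=1}^m(z-y_j)^2}{(c-a)(c-b)\prod_{j=1}^m(c-y_j)^2}$$ for some $x_1,\dots,x_m,y_1,\dots,y_m\in\mathbb{C}$. Put $s_k:=\tfrac12\bigl(a^k+b^k+c^k-d^k\bigr)$, $k=1,\dots,2m+1$, and form $F_k,\mathbf F,\mathbf F_i$ with $\nu=m+1$, $\mu=m$. Then $\det\mathbf F\ne0$ and $y_1,\dots,y_m$ (with multiplicity) are exactly the zeros of $$y^{m}\det\mathbf F+y^{m-1}\det\mathbf F_1+\dots+y\det\mathbf F_{m-1}+\det\mathbf F_m.$$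
   Context: $H(z)=(z-a)(z-b)(z-c)(z-d)$. Given complex numbers $s_1,s_2,\dots$: $F_0:=1$, $F_k:=0$ for $k<0$, and for $k\ge1$, $F_k:=\frac{(-1)^k}{k!}\det M_k$ where $M_k$ is the $k\times k$ matrix with entry $s_{i-j+1}$ for $j\le i$, entry $i$ at position $(i,i+1)$, and $0$ elsewhere. For integers $\nu\ge0,\mu\ge0$, $\mathbf F$ is the $\mu\times\mu$ matrix with $(i,j)$ entry $F_{\nu+i-j}$, and $\mathbf F_i$ ($1\le i\le\mu$) is $\mathbf F$ with its $i$-th column replaced by $(-F_{\nu+1},\dots,-F_{\nu+\mu})^T$. Convention: if $\mu=0$, $\det\mathbf F:=1$. *)

From HB Require Import structures.
From mathcomp Require Import all_boot all_order all_algebra.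
Set Implicit Arguments. Unset Strict Implicit. Unset Printing Implicit Defensive.
Import Order.TTheory GRing.Theory Num.Theory.
Local Open Scope ring_scope.

Definition Hpoly (R : numClosedFieldType) (a b c d : R) : {poly R} :=
  ('X - a%:P) * ('X - b%:P) * ('X - c%:P) * ('X - d%:P).

(* The k x k matrix M_k (0-based indices): entry s_{i-j+1} for j <= i,
   entry i+1 (the 1-based row index) at position (i, i+1), 0 elsewhere. *)
Definition Mmat (R : numClosedFieldType) (s : nat -> R) (k : nat) : 'M[R]_k :=
  \matrix_(i < k, j < k)
    (if (j <= i)%N then s (i - j).+1
     else if j == i.+1 :> nat then (i.+1)%:R else 0).

Definition Fk (R : numClosedFieldType) (s : nat -> R) (k : int) : R :=
  match k with
  | Posz n => (-1) ^+ n / (n`!)%:R * \det (Mmat s n)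
  | Negz _ => 0
  end.

Definition FF (R : numClosedFieldType) (s : nat -> R) (nu mu : nat) : 'M[R]_mu :=
  \matrix_(i < mu, j < mu) Fk s (nu%:Z + i%:Z - j%:Z).

(* Bold F_{c+1} (c 0-based): column c replaced by (-F_{nu+1},...,-F_{nu+mu})^T. *)
Definition FFi (R : numClosedFieldType) (s : nat -> R) (nu mu : nat) (c : 'I_mu)
  : 'M[R]_mu :=
  \matrix_(i < mu, j < mu)
    (if j == c then - Fk s (Posz (nu + i.+1)%N) else (FF s nu mu) i j).

Definition Fpoly (R : numClosedFieldType) (s : nat -> R) (nu mu : nat) : {poly R} :=
  (\det (FF s nu mu)) *: 'X^mu
  + \sum_(c < mu) (\det (@FFi R s nu mu c)) *: 'X^(mu - c.+1).

From HB Require Import structures.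
From mathcomp Require Import all_boot all_order all_algebra.
From mathcomp Require Import ring zify.
Set Implicit Arguments. Unset Strict Implicit. Unset Printing Implicit Defensive.
Import GRing.Theory Num.Theory.
Local Open Scope ring_scope.

(* Let f = sum_k F_k X^k.  By Newton's identities (the F_k are defined by
   determinants of the matrices M_k), f'/f = - sum_k s_(k+1) X^k, which for
   s_k = (a^k + b^k + c^k - d^k)/2 means that, as a formal power series,
   f^2 (1 - dX) = (1 - aX)(1 - bX)(1 - cX).

   The hypotheses on T yield the identity
   (X - c)(X - d) P^2 - (X - a)(X - b) Q^2 = C  (C a nonzero constant),
   P, Q the monic polynomials with roots x_j, y_j.  Put W = (X - c) P and let
   W~, Q~ be the reversed polynomials (reversal at degrees m+1 and m).  Reversing
   the identity gives W~^2 (1 - dX) = (1 - aX)(1 - bX)(1 - cX) Q~^2 mod X^(2m+2),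
   whence f Q~ = W~ mod X^(2m+2): Q~/W~ is a Pade approximant of f.  As
   deg W~ <= m+1, the coefficients m+2, ..., 2m+1 of f Q~ vanish, i.e. the
   coefficients of Q solve the linear system with matrix F.  The matrix F is
   invertible: a kernel vector v yields a second approximant S / L of f with
   L = v_1 X + ... + v_m X^m; cross-multiplying the two approximants, reversing,
   and using that Q and W are coprime, Q divides the reversal of L, which has
   degree < m, so v = 0.  Cramer's rule then identifies det F_i / det F with
   the coefficients of Q. *)

(* The reversed linear factor 1 - xX of X - x. *)
Definition lin (R : nzRingType) (x : R) : {poly R} := 1 - x%:P * 'X.

Section Reversal.
Variable R : nzRingType.
Implicit Types p q : {poly R}.

(* revp n p = X^n p(1/X): the reversal of p read as a polynomial of degree n. *)
Definition revp (n : nat) p : {poly R} := \poly_(i < n.+1) p`_(n - i).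

Lemma coef_revp n p i : (revp n p)`_i = if (i <= n)%N then p`_(n - i) else 0.
Proof. by rewrite coef_poly ltnS. Qed.

Lemma size_revp n p : (size (revp n p) <= n.+1)%N.
Proof. exact: size_poly. Qed.

Lemma revpD n p q : revp n (p + q) = revp n p + revp n q.
Proof. by apply/polyP=> i; rewrite coefD !coef_revp; case: ifP; rewrite ?coefD ?addr0. Qed.

Lemma revpZ k n p : revp n (k *: p) = k *: revp n p.
Proof. by apply/polyP=> i; rewrite coefZ !coef_revp; case: ifP; rewrite ?coefZ ?mulr0. Qed.

HB.instance Definition _ n := GRing.isSemilinear.Build R {poly R} {poly R} _
  (revp n) (revpZ^~ n, revpD n).

Lemma revpXn n k : (k <= n)%N -> revp n 'X^k = 'X^(n - k).
Proof.
move=> kn; apply/polyP=> i; rewrite coef_revp !coefXn.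
case: ifP => [ilen|/negbT]; last by rewrite -ltnNge => ni; case: eqP => //; lia.
suff -> : (n - i == k)%N = (i == n - k)%N by [].
by apply/idP/idP => /eqP E; apply/eqP; lia.
Qed.

Lemma revpK n p : (size p <= n.+1)%N -> revp n (revp n p) = p.
Proof.
move=> sp; apply/polyP=> i; rewrite !coef_revp.
case: ifP => [ilen|/negbT]; first by rewrite leq_subr subKn.
by rewrite -ltnNge => ni; apply/esym; move/leq_sizeP: sp; apply.
Qed.

Lemma revp_XsubC x : revp 1 ('X - x%:P) = lin x.
Proof.
apply/polyP=> i; rewrite coef_revp /lin !coefE.
by case: i => [|[|i]] //=; rewrite ?mulr0 ?mulr1 ?subr0 ?sub0r.
Qed.

Lemma poly_expand n p : (size p <= n)%N -> p = \sum_(i < n) p`_i *: 'X^i.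
Proof. by move=> sp; rewrite -[LHS](take_poly_id sp) /take_poly poly_def. Qed.

End Reversal.

Lemma size_mul_bd (R : nzRingType) (p q : {poly R}) (n1 n2 : nat) :
  (size p <= n1.+1)%N -> (size q <= n2.+1)%N -> (size (p * q)%R <= (n1 + n2).+1)%N.
Proof.
move=> hp hq; apply: leq_trans (size_polyMleq p q) _.
by move: (size p) (size q) hp hq => u v; lia.
Qed.

Lemma revpM (R : comNzRingType) (n1 n2 : nat) (p q : {poly R}) :
  (size p <= n1.+1)%N -> (size q <= n2.+1)%N ->
  revp (n1 + n2) (p * q) = revp n1 p * revp n2 q.
Proof.
move=> sp sq; rewrite (poly_expand sp) (poly_expand sq) mulr_suml !linear_sum mulr_suml.
apply: eq_bigr => i _; rewrite mulr_sumr linear_sum mulr_sumr; apply: eq_bigr => j _.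
have hi := ltn_ord i; have hj := ltn_ord j.
rewrite -scalerAl -scalerAr !linearZ /= -exprD !revpXn; try lia.
by rewrite -scalerAl -scalerAr -exprD; congr (_ *: (_ *: 'X^_)); lia.
Qed.

Lemma revp_lin2_sqr (R : comNzRingType) (m : nat) (u v : R) (p : {poly R}) :
  (size p <= m.+1)%N ->
  revp (m + m).+2 (('X - u%:P) * ('X - v%:P) * p ^+ 2) = lin u * lin v * revp m p ^+ 2.
Proof.
move=> sp; have sX (w : R) : (size ('X - w%:P)%R <= 2)%N by rewrite size_XsubC.
rewrite -[(m + m).+2]/((1 + 1) + (m + m))%N !expr2 !revpM ?revp_XsubC //.
  exact: size_mul_bd.
exact: size_mul_bd.
Qed.

Section DivisibilityByXn.
Variable R : fieldType.
Implicit Types p q : {poly R}.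

Lemma dvdXnP n p : reflect (forall i, (i < n)%N -> p`_i = 0) ('X^n %| p).
Proof.
apply: (iffP idP); first by case/dvdpP=> q -> i ilt; rewrite coefMXn ilt.
move=> H; apply/dvdpP; exists (\poly_(i < size p) p`_(i + n)).
apply/polyP=> i; rewrite coefMXn; case: ifP => [/H //|/negbT].
rewrite -leqNgt => ni; rewrite coef_poly subnK //.
case: ifP => // /negbT; rewrite -leqNgt => si.
by move/leq_sizeP: (leqnn (size p)); apply; exact: leq_trans si (leq_subr n i).
Qed.

(* A factor with nonzero constant term is a unit modulo X^n. *)
Lemma dvdXn_mul_cancel n p q : q`_0 != 0 -> 'X^n %| p * q -> 'X^n %| p.
Proof.
move=> q0; rewrite Gauss_dvdpl //; apply: coprimep_expl.
by rewrite coprimep_sym -['X]subr0 -polyC0 coprimep_XsubC /root horner_coef0.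
Qed.

Lemma dvdXn_eq0 n p : (size p <= n)%N -> 'X^n %| p -> p = 0.
Proof.
move=> sp dv; apply/eqP; apply: contraT => p0.
by have := leq_trans (dvdp_leq p0 dv) sp; rewrite size_polyXn ltnn.
Qed.

Lemma dvdXn_revp n k p : (size p <= k.+1)%N -> 'X^(n - k) %| revp n p.
Proof.
move=> sp; apply/dvdXnP => i hi; rewrite coef_revp; case: ifP => // _.
by move/leq_sizeP: sp; apply; lia.
Qed.

Lemma dvdXn_sub_take n N p :
  (forall i, (n <= i < N)%N -> p`_i = 0) -> 'X^N %| p - take_poly n p.
Proof.
move=> p0; apply/dvdXnP => i iN; rewrite coefB coef_take_poly.
by case: ltnP => ni; rewrite ?subrr // subr0 p0 // ni.
Qed.

Lemma pade_cross N (f A B L S : {poly R}) :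
  'X^N %| f * A - B -> 'X^N %| f * L - S ->
  (size (L * B)%R <= N)%N -> (size (A * S)%R <= N)%N -> L * B = A * S.
Proof.
move=> dAB dLS sLB sAS; apply/eqP; rewrite -subr_eq0; apply/eqP.
apply: (dvdXn_eq0 (n := N)).
  by apply: leq_trans (size_polyD _ _) _; rewrite size_polyN geq_max sLB sAS.
have -> : L * B - A * S = A * (f * L - S) - L * (f * A - B) by ring.
by apply: dvdp_sub; apply: dvdp_mull.
Qed.

End DivisibilityByXn.

Section Newton.
Variables (R : numClosedFieldType) (s : nat -> R).

(* M_k with its last row replaced by (s_(k+t), ..., s_(1+t)); for t = 0 this
   is M_k itself, and expanding along the last column relates t to t+1. *)
Definition Mlast (k t : nat) : 'M[R]_k :=
  \matrix_(i < k, j < k)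
    (if (i.+1 == k)%N then s (k - j + t)%N
     else if (j <= i)%N then s (i - j).+1
     else if j == i.+1 :> nat then (i.+1)%:R else 0).

Lemma Mlast0 k : Mlast k 0 = Mmat s k.
Proof.
apply/matrixP=> i j; rewrite !mxE.
case: eqP => // E; have jk := ltn_ord j; rewrite (_ : (j <= i)%N); last by lia.
by congr s; lia.
Qed.

Lemma det_Mlast_rec k t :
  \det (Mlast k.+1 t) = s t.+1 * \det (Mmat s k) - k%:R * \det (Mlast k t.+1).
Proof.
rewrite (expand_det_col _ ord_max) (bigD1_ord ord_max) //=.
rewrite {1}/cofactor -signr_odd addnn odd_double expr0 mul1r.
have -> : row' ord_max (col' ord_max (Mlast k.+1 t)) = Mmat s k.
  apply/matrixP=> i j; rewrite !mxE !lift_max.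
  by rewrite eqSS (ltn_eqF (ltn_ord i)).
rewrite mxE eqxx subSnn add1n; congr (_ + _).
case: k => [|k]; first by rewrite big_ord0 mul0r oppr0.
rewrite (bigD1_ord ord_max) //= big1 ?addr0; last first.
  move=> i _; have hi := ltn_ord i; rewrite mxE !lift_max /=.
  rewrite ifF; last by apply/negbTE; lia.
  rewrite ifF; last by apply/negbTE; lia.
  by rewrite ifF ?mul0r //; apply/negbTE; lia.
rewrite mxE /= /bump ltnn add0n eqxx ifF; last by apply/negbTE; lia.
rewrite ifF; last by apply/negbTE; lia.
rewrite /cofactor /= /bump ltnn add0n addnS -signr_odd /= addnn odd_double /=.
rewrite expr1 mulN1r mulrN; congr (- (_ * _)).
congr (\det _); apply/matrixP=> i j; rewrite !mxE !lift_max /= /bump ?lift_max ltnn add0n.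
have hi := ltn_ord i; have hj := ltn_ord j.
case: (eqVneq (i : nat) k) => [->|ik].
  by rewrite leqnn add1n !eqxx; congr s; lia.
rewrite (_ : (k <= i)%N = false) ?add0n; last by apply/negbTE; lia.
rewrite ifF; last by apply/negbTE; lia.
by rewrite [in RHS]ifF //; apply/negbTE; lia.
Qed.

Lemma det_Mmat k : \det (Mmat s k) = (-1) ^+ k * k`!%:R * Fk s (Posz k).
Proof.
have fne : k`!%:R != 0 :> R by rewrite pnatr_eq0 -lt0n fact_gt0.
rewrite /Fk; set D := \det _.
have -> : (-1) ^+ k * k`!%:R * ((-1) ^+ k / k`!%:R * D) =
   ((-1) ^+ k * (-1) ^+ k) * (k`!%:R / k`!%:R) * D :> R by ring.
by rewrite divff // -exprMn mulrNN mulr1 mul1r expr1n mul1r.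
Qed.

Lemma Fk0 : Fk s (Posz 0) = 1.
Proof. by rewrite /Fk det_mx00 expr0 fact0 divr1 mulr1. Qed.

Lemma det_Mlast k t :
  \det (Mlast k.+1 t) =
  (-1) ^+ k * k`!%:R * \sum_(r < k.+1) s (t + r.+1)%N * Fk s (Posz (k - r)%N).
Proof.
elim: k t => [|k IH] t.
  by rewrite det_Mlast_rec det_mx00 big_ord1 subn0 Fk0 addn1 expr0 fact0; ring.
rewrite det_Mlast_rec IH det_Mmat [in RHS]big_ord_recl subn0 addn1.
rewrite [in RHS](eq_bigr (fun i : 'I_k.+1 => s (t.+1 + i.+1)%N * Fk s (Posz (k - i)%N))).
  by rewrite factS natrM exprS; ring.
by move=> i _; rewrite lift0 subSS addSnnS.
Qed.

Lemma Fk_newton k :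
  (k.+1)%:R * Fk s (Posz k.+1) = - \sum_(r < k.+1) s r.+1 * Fk s (Posz (k - r)%N).
Proof.
have := det_Mlast k 0; rewrite Mlast0 det_Mmat factS natrM exprS.
have fne : (-1) ^+ k * k`!%:R != 0 :> R.
  by rewrite mulf_neq0 ?signr_eq0 // pnatr_eq0 -lt0n fact_gt0.
by move=> E; apply: (mulfI fne); rewrite mulrN -E; ring.
Qed.

End Newton.

(* Uniqueness for the linear ODE e' g = e g': if e(0) = 0, g(0) != 0 and the
   Wronskian e' g - e g' vanishes to order n, then e vanishes to order n+1. *)
Lemma dvdXn_wronskian (R : numFieldType) (n : nat) (e g : {poly R}) :
  g`_0 != 0 -> e`_0 = 0 -> 'X^n %| e^`() * g - e * g^`() -> 'X^(n.+1) %| e.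
Proof.
move=> g0 e0 /dvdXnP H; apply/dvdXnP.
suff Hs k : (k <= n)%N -> forall i, (i <= k)%N -> e`_i = 0.
  by move=> i hi; exact: (Hs i hi i (leqnn i)).
elim: k => [_ i|j IH jn i]; first by rewrite leqn0 => /eqP ->.
rewrite leq_eqVlt => /orP [/eqP ->|]; last by rewrite ltnS; apply: IH; lia.
have := H j jn; rewrite coefB !coefM big_ord_recr /= big1; last first.
  by move=> l _; rewrite coef_deriv IH ?mul0rn ?mul0r //; lia.
rewrite big1; last by move=> l _; rewrite IH ?mul0r //; have := ltn_ord l; lia.
rewrite add0r subr0 subnn coef_deriv => /eqP.
by rewrite mulf_eq0 (negbTE g0) orbF mulrn_eq0 /= => /eqP.
Qed.

Section PowerSeries.
Variable R : numClosedFieldType.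

Lemma deriv_lin (x : R) : (lin x)^`() = - x%:P.
Proof. by rewrite /lin !derivE mulr1 sub0r. Qed.

Lemma lin_coef0 (x : R) : (lin x)`_0 = 1.
Proof. by rewrite -horner_coef0 /lin !hornerE subr0. Qed.

Definition Fser (s : nat -> R) (N : nat) : {poly R} := \poly_(i < N) Fk s (Posz i).

(* Newton's identities say f' = - (sum_k s_(k+1) X^k) f. *)
Lemma Fser_logder (s : nat -> R) (n : nat) :
  'X^n %| (Fser s n.+1)^`() + (\poly_(i < n.+1) s i.+1) * Fser s n.+1.
Proof.
apply/dvdXnP => i iN; rewrite coefD coef_deriv coefM /Fser coef_poly ltnS iN.
rewrite -mulr_natl Fk_newton; apply/eqP; rewrite addrC subr_eq0; apply/eqP.
apply: eq_bigr => j _; rewrite !coef_poly; have := ltn_ord j.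
by move=> hj; rewrite ifT; [rewrite ifT //|]; lia.
Qed.

(* The truncated geometric series x / (1 - xX) = -(1 - xX)' / (1 - xX). *)
Definition geo (x : R) (N : nat) : {poly R} := \poly_(i < N) x ^+ i.+1.

Lemma geoP (x : R) (N : nat) : 'X^N %| lin x * geo x N - x%:P.
Proof.
apply/dvdXnP => i iN; rewrite /lin mulrBl mul1r -mulrA !coefE iN.
case: i iN => [|i] iN /=; first by rewrite mulr0 subr0 expr1 subrr.
by rewrite ltnW // exprS subrr subr0.
Qed.

Definition psum (a b c d : R) (k : nat) : R := (a ^+ k + b ^+ k + c ^+ k - d ^+ k) / 2.

(* For these power sums f^2 (1 - dX) = (1 - aX)(1 - bX)(1 - cX) as power series:
   both sides have the same logarithmic derivative and constant term 1. *)
Lemma Fser_sq (a b c d : R) (N : nat) :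
  'X^N %| Fser (psum a b c d) N ^+ 2 * lin d - lin a * lin b * lin c.
Proof.
case: N => [|n]; first by rewrite expr0 dvd1p.
have hf := Fser_logder (psum a b c d) n.
have f0 : (Fser (psum a b c d) n.+1)`_0 = 1 by rewrite coef_poly Fk0.
have hS : (\poly_(i < n.+1) psum a b c d i.+1) *+ 2 =
          geo a n.+1 + geo b n.+1 + geo c n.+1 - geo d n.+1.
  apply/polyP=> i; rewrite !coefE; case: ifP => _; last by rewrite mul0rn !addr0 subr0.
  by rewrite /psum; field.
move: (Fser _ _) (\poly_(i < n.+1) _) hf f0 hS => f S hf f0 hS.
set g := lin a * lin b * lin c.
have g0 : g`_0 = 1 by rewrite -horner_coef0 /g !hornerM !horner_coef0 !lin_coef0 !mulr1.
have dg : g^`() = - a%:P * lin b * lin c - b%:P * lin a * lin c - c%:P * lin a * lin b.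
  by rewrite /g !derivM !deriv_lin; ring.
have wronskian : (f ^+ 2 * lin d - g)^`() * g - (f ^+ 2 * lin d - g) * g^`() =
    (f *+ 2) * lin d * g * (f^`() + S * f)
  - f ^+ 2 * ((lin a * geo a n.+1 - a%:P) * lin b * lin c * lin d
             + (lin b * geo b n.+1 - b%:P) * lin a * lin c * lin d
             + (lin c * geo c n.+1 - c%:P) * lin a * lin b * lin d
             - (lin d * geo d n.+1 - d%:P) * g)
  + f ^+ 2 * lin d * g * (geo a n.+1 + geo b n.+1 + geo c n.+1 - geo d n.+1 - S *+ 2).
  by rewrite derivB derivM expr2 derivM deriv_lin dg /g; ring.
apply: (dvdXn_wronskian (g := g)); first by rewrite g0 oner_neq0.
  by rewrite coefB g0 -horner_coef0 !hornerM !horner_coef0 f0 lin_coef0 !mulr1 subrr.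
rewrite wronskian -hS subrr mulr0 addr0; apply: dvdp_sub; first exact: dvdp_mull.
apply: dvdp_mull; have G x := dvdp_trans (dvdp_exp2l 'X (leqnSn n)) (geoP x n.+1).
by apply: dvdp_sub; [apply: dvdp_add; [apply: dvdp_add|]|]; do ?apply: dvdp_mulr; apply: G.
Qed.

End PowerSeries.

Section ShiftedVectors.
Variables (R : nzRingType) (m : nat).
Implicit Type w : 'I_m -> R.

Definition shiftp w : {poly R} := \sum_(j < m) w j *: 'X^(j.+1).

Lemma coef_shiftp0 w : (shiftp w)`_0 = 0.
Proof. by rewrite coef_sum big1 // => j _; rewrite coefZ coefXn mulr0. Qed.

Lemma coef_shiftpS w (j : 'I_m) : (shiftp w)`_(j.+1) = w j.
Proof.
rewrite coef_sum (bigD1 j) //= coefZ coefXn eqxx mulr1 big1 ?addr0 //.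
move=> k kj; rewrite coefZ coefXn; case: eqP; rewrite ?mulr0 // => E.
by case/eqP: kj; apply: val_inj; case: E.
Qed.

Lemma coef_shiftp_gt w k : (m < k)%N -> (shiftp w)`_k = 0.
Proof.
move=> mk; rewrite coef_sum big1 // => j _; rewrite coefZ coefXn.
by case: eqP; rewrite ?mulr0 // => E; have := ltn_ord j; lia.
Qed.

Lemma size_shiftp w : (size (shiftp w) <= m.+1)%N.
Proof. by apply/leq_sizeP => k hk; apply: coef_shiftp_gt. Qed.

End ShiftedVectors.

Lemma shiftp_dvd_eq0 (R : fieldType) (m : nat) (Q : {poly R}) (w : 'I_m -> R) :
  size Q = m.+1 -> Q %| revp m (shiftp w) -> shiftp w = 0.
Proof.
move=> sQ dvQ; have sL : (size (revp m (shiftp w)) <= m)%N.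
  apply/leq_sizeP => j hj; rewrite coef_revp.
  by case: ifP => // hj2; rewrite (_ : m - j = 0)%N ?coef_shiftp0 //; lia.
have L0 : revp m (shiftp w) = 0.
  apply/eqP; apply: contraT => nz.
  by have := leq_trans (dvdp_leq nz dvQ) sL; rewrite sQ ltnn.
by rewrite -(revpK (size_shiftp w)) L0 linear0.
Qed.

Lemma FF_entry (R : numClosedFieldType) (s : nat -> R) (m : nat) (i j : 'I_m) :
  FF s m.+1 m i j = Fk s (Posz (m.+1 + i - j)%N).
Proof. by rewrite mxE -PoszD subzn //; have := ltn_ord j; lia. Qed.

Lemma coef_Fser_shiftp (R : numClosedFieldType) (s : nat -> R) (m : nat)
    (w : 'I_m -> R) (i : 'I_m) :
  (Fser s (m + m).+2 * shiftp w)`_(m.+2 + i) = \sum_j FF s m.+1 m i j * w j.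
Proof.
rewrite /shiftp mulr_sumr coef_sum; apply: eq_bigr => j _.
rewrite -scalerAr coefZ coefMXn FF_entry mulrC.
have hi := ltn_ord i; have hj := ltn_ord j.
rewrite ifF; last by apply/negbTE; lia.
by rewrite coef_poly ifT; [congr (Fk s (Posz _) * _) |]; lia.
Qed.

Lemma cramer_rule (R : comUnitRingType) (m : nat) (A : 'M[R]_m) (q : 'cV[R]_m)
    (v : 'I_m -> R) (c : 'I_m) :
  A *m q = \col_i v i ->
  \det A * q c 0 = \det (\matrix_(i, j) (if j == c then v i else A i j)).
Proof.
move=> Aq; rewrite [in RHS](expand_det_col _ c).
have -> : \det A * q c 0 = ((\adj A *m A) *m q) c 0.
  by rewrite mul_adj_mx mul_scalar_mx mxE.
rewrite -mulmxA Aq mxE; apply: eq_bigr => i _.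
rewrite !mxE eqxx mulrC; congr (_ * _).
rewrite /cofactor; congr (_ * \det _); apply/matrixP=> k l; rewrite !mxE.
by rewrite ifF //; apply/negbTE; rewrite eq_sym; exact: neq_lift.
Qed.

Section DeterminantalFormula.
Variables (R : numClosedFieldType) (m : nat) (a b c d C : R) (P Q : {poly R}).
Hypotheses (mP : P \is monic) (sP : size P = m.+1) (mQ : Q \is monic) (sQ : size Q = m.+1).
Hypothesis C0 : C != 0.
Hypothesis ident :
  ('X - c%:P) * ('X - d%:P) * P ^+ 2 - ('X - a%:P) * ('X - b%:P) * Q ^+ 2 = C%:P.

Let s := psum a b c d.
Let f := Fser s (m + m).+2.
Let W := ('X - c%:P) * P.
Let Wt := revp m.+1 W.
Let Qt := revp m Q.
Let q (j : 'I_m) := Q`_(m - j.+1).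

Lemma size_W : (size W <= m.+2)%N.
Proof. by apply: (size_mul_bd (n1 := 1)); rewrite ?size_XsubC ?sP. Qed.

Lemma coef_Q_lead : Q`_m = 1.
Proof. by have := monicP mQ; rewrite /lead_coef sQ. Qed.

(* The identity is a Bezout relation for Q and W. *)
Lemma coprime_Q_W : coprimep Q W.
Proof.
apply/Bezout_coprimepP.
exists (- (C^-1)%:P * (('X - a%:P) * ('X - b%:P) * Q), (C^-1)%:P * (('X - d%:P) * P)) => /=.
have -> : - (C^-1)%:P * (('X - a%:P) * ('X - b%:P) * Q) * Q + (C^-1)%:P * (('X - d%:P) * P) * W
  = (C^-1)%:P * (('X - c%:P) * ('X - d%:P) * P ^+ 2 - ('X - a%:P) * ('X - b%:P) * Q ^+ 2).
  by rewrite /W; ring.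
by rewrite ident -polyCM mulVf // eqpxx.
Qed.

Lemma Wt_lin : Wt = lin c * revp m P.
Proof. by rewrite /Wt /W -[m.+1]/(1 + m)%N revpM ?revp_XsubC ?size_XsubC ?sP. Qed.

Lemma coef0_Qt : Qt`_0 = 1.
Proof. by rewrite coef_revp subn0 coef_Q_lead. Qed.

Lemma coef0_Wt : Wt`_0 = 1.
Proof.
rewrite Wt_lin -horner_coef0 hornerM !horner_coef0 lin_coef0 mul1r coef_revp subn0.
by have := monicP mP; rewrite /lead_coef sP.
Qed.

Lemma rev_identity :
  'X^((m + m).+2) %| Wt ^+ 2 * lin d - lin a * lin b * lin c * Qt ^+ 2.
Proof.
have := congr1 (revp (m + m).+2) ident.
rewrite linearB /= !revp_lin2_sqr ?sP ?sQ // => erev.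
have dvC : 'X^((m + m).+2) %| revp (m + m).+2 C%:P.
  by rewrite -[X in 'X^X](subn0 (m + m).+2); apply: dvdXn_revp; exact: size_polyC_leq1.
have -> : Wt ^+ 2 * lin d - lin a * lin b * lin c * Qt ^+ 2 =
    lin c * (lin c * lin d * revp m P ^+ 2 - lin a * lin b * Qt ^+ 2).
  by rewrite Wt_lin; ring.
by rewrite erev; apply: dvdp_mull.
Qed.

Lemma Fser_pade : 'X^((m + m).+2) %| f * Qt - Wt.
Proof.
have : 'X^((m + m).+2) %| ((f * Qt) ^+ 2 - Wt ^+ 2) * lin d.
  have -> : ((f * Qt) ^+ 2 - Wt ^+ 2) * lin d =
    Qt ^+ 2 * (f ^+ 2 * lin d - lin a * lin b * lin c)
    - (Wt ^+ 2 * lin d - lin a * lin b * lin c * Qt ^+ 2) by ring.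
  by apply: dvdp_sub; [apply: dvdp_mull; exact: Fser_sq | exact: rev_identity].
move/dvdXn_mul_cancel; rewrite lin_coef0 oner_neq0 => /(_ isT).
rewrite subr_sqr; apply: dvdXn_mul_cancel.
rewrite -horner_coef0 hornerD hornerM !horner_coef0 coef0_Qt coef0_Wt mulr1.
by rewrite /f coef_poly Fk0 -mulr2n mulrn_eq0 oner_eq0.
Qed.

Lemma Qt_shift : Qt = 1 + shiftp q.
Proof.
apply/polyP => k; rewrite coef_revp coefD coef1.
case: k => [|j]; first by rewrite coef_shiftp0 subn0 coef_Q_lead addr0.
rewrite /= add0r; case: (ltnP j m) => hj; first by rewrite (coef_shiftpS _ (Ordinal hj)).
by rewrite coef_shiftp_gt.
Qed.

(* Since deg W~ <= m+1, the coefficients m+2, ..., 2m+1 of f Q~ vanish: the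
   coefficients of Q solve F q = -(F_(m+2), ..., F_(2m+1)). *)
Lemma FF_system : FF s m.+1 m *m \col_j q j = \col_i (- Fk s (Posz (m.+1 + i.+1)%N)).
Proof.
apply/matrixP => i k; rewrite (ord1 k) !mxE.
have hi := ltn_ord i; have hmi : (m.+2 + i < (m + m).+2)%N by lia.
have := dvdXnP _ _ Fser_pade (m.+2 + i)%N hmi.
rewrite coefB Qt_shift mulrDr mulr1 coefD coef_Fser_shiftp /Wt coef_revp.
rewrite ifF; last by apply/negbTE; lia.
rewrite subr0 /f coef_poly hmi (_ : (m.+1 + i.+1 = m.+2 + i)%N); last by lia.
move=> /eqP; rewrite addrC addr_eq0 => /eqP <-.
by apply: eq_bigr => j _; congr (_ * _); rewrite mxE.
Qed.

(* F is invertible: a kernel vector v gives a second approximant S / L of f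
   with L = shiftp v; cross-multiplying with Q~ / W~ and reversing shows that
   Q, coprime to W, divides the reversal of L, of degree < m. *)
Lemma FF_det_neq0 : \det (FF s m.+1 m) != 0.
Proof.
apply/negP; rewrite -det_tr => /det0P [v v0 hv].
pose L := shiftp (v 0).
have fL i : (m.+2 <= i < (m + m).+2)%N -> (f * L)`_i = 0.
  case/andP=> hi1 hi2; have hi : (i - m.+2 < m)%N by lia.
  rewrite -(subnKC hi1) (coef_Fser_shiftp _ _ (Ordinal hi)).
  have := congr1 (fun M : 'rV_m => M 0 (Ordinal hi)) hv; rewrite !mxE => E.
  by rewrite -[X in _ = X]E; apply: eq_bigr => j _; rewrite [RHS]mulrC [in RHS]mxE.
pose S := take_poly m.+2 (f * L).
have cross : L * Wt = Qt * S.
  apply: (pade_cross Fser_pade (dvdXn_sub_take fL)); rewrite -addnS.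
    by apply: size_mul_bd; [exact: size_shiftp | exact: size_revp].
  by apply: size_mul_bd; [exact: size_revp | exact: size_take_poly].
have : Q %| revp m L * W.
  have := congr1 (revp (m + m.+1)) cross.
  rewrite revpM ?size_shiftp ?size_revp // revpM ?size_revp ?size_take_poly //.
  by rewrite revpK ?size_W // revpK ?sQ // => ->; exact: dvdp_mulIl.
rewrite Gauss_dvdpl ?coprime_Q_W // => /(shiftp_dvd_eq0 sQ) L0.
case/eqP: v0; apply/matrixP => i j; rewrite (ord1 i) !mxE.
by have := coef_shiftpS (v 0) j; rewrite L0 coef0.
Qed.

(* By Cramer's rule det F_(c+1) = det F * q_c, so the polynomial of the
   theorem is det F times Q. *)
Lemma Fpoly_eq : Fpoly s m.+1 m = \det (FF s m.+1 m) *: Q.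
Proof.
have hc c0 : \det (FFi s m.+1 c0) = \det (FF s m.+1 m) * q c0.
  have := cramer_rule c0 FF_system; rewrite mxE => ->.
  by congr (\det _); apply/matrixP => i j; rewrite !mxE.
rewrite /Fpoly (eq_bigr (fun c0 => \det (FF s m.+1 m) *: (q c0 *: 'X^(m - c0.+1)))).
  rewrite -scaler_sumr -scalerDr; congr (_ *: _).
  rewrite [in RHS](poly_expand (n := m.+1) (p := Q)) ?sQ // big_ord_recr /=.
  rewrite coef_Q_lead scale1r addrC; congr (_ + _).
  rewrite (reindex_inj rev_ord_inj) /=; apply: eq_bigr => i _.
  by rewrite /q /= (_ : (m - (m - i.+1).+1 = i)%N) //; have := ltn_ord i; lia.
by move=> c0 _; rewrite hc scalerA.
Qed.

End DeterminantalFormula.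

Lemma size_lin2_sqr (R : idomainType) (m : nat) (u v : R) (p : {poly R}) :
  p \is monic -> size p = m.+1 ->
  size (('X - u%:P) * ('X - v%:P) * p ^+ 2) = (m + m).+3.
Proof.
move=> mp sp; rewrite size_monicM ?rpredM ?monicXsubC ?expf_neq0 ?monic_neq0 //.
rewrite size_monicM ?monicXsubC ?monic_neq0 ?monicXsubC // !size_XsubC.
by rewrite expr2 size_monicM ?monic_neq0 // sp /= addnS.
Qed.

(* Two representations 1 - al A = -1 + be B of the same polynomial, with A, B
   monic of the same degree >= 1 and al != 0, force A - B = 2 / al: comparing
   leading coefficients gives be = -al. *)
Lemma monic_difference_const (R : fieldType) (al be : R) (A B : {poly R}) :
  A \is monic -> B \is monic -> size A = size B -> (1 < size A)%N -> al != 0 ->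
  1 - al *: A = -1 + be *: B -> A - B = (2 / al)%:P.
Proof.
move=> mA mB sAB sA al0 E.
have lead1 (p : {poly R}) : p \is monic -> p`_(size p).-1 = 1 by move/monicP.
have hbe : be = - al.
  have := congr1 (fun p : {poly R} => p`_(size A).-1) E.
  rewrite /= coefB coefD coefN !coef1 !coefZ lead1 // sAB lead1 // -sAB.
  case: (size A) sA => [|[|n]] // _ /=.
  by rewrite !mulr1 oppr0 sub0r add0r => ->.
have -> : A - B = al^-1 *: (1 + 1 - ((1 - al *: A) - (-1 + - al *: B))).
  rewrite scaleNr (_ : 1 + 1 - _ = al *: (A - B)); last by rewrite scalerBr; ring.
  by rewrite scalerA mulVf ?scale1r.
by rewrite E hbe subrr subr0 -polyC1 -polyCD -mul_polyC -polyCM mulrC.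
Qed.

Theorem theorem2 (R : numClosedFieldType) (m : nat) (a b c d : R)
    (T U : {poly R}) (x y : 'I_m -> R) :
    size T = (2 * m + 2).+1 ->
    (size U <= (2 * m + 2) - 1)%N ->
    T ^+ 2 - Hpoly a b c d * U ^+ 2 = 1 ->
    T = 1 - (2 / ((a - c) * (a - d) * \prod_(j < m) (a - x j) ^+ 2)) *:
          (('X - c%:P) * ('X - d%:P) * \prod_(j < m) ('X - (x j)%:P) ^+ 2) ->
    T = -1 + (2 / ((c - a) * (c - b) * \prod_(j < m) (c - y j) ^+ 2)) *:
          (('X - a%:P) * ('X - b%:P) * \prod_(j < m) ('X - (y j)%:P) ^+ 2) ->
    let s := fun k : nat => (a ^+ k + b ^+ k + c ^+ k - d ^+ k) / 2 in
    \det (FF s m.+1 m) != 0 /\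
    Fpoly s m.+1 m = \det (FF s m.+1 m) *: \prod_(j < m) ('X - (y j)%:P).
Proof.
move=> sT _ _; set al := 2 / _ => eT1 eT2 s.
rewrite !prodrXl in eT1 eT2.
have mprod (z : 'I_m -> R) : \prod_(j < m) ('X - (z j)%:P) \is monic.
  exact: monic_prod_XsubC.
have sprod (z : 'I_m -> R) : size (\prod_(j < m) ('X - (z j)%:P)) = m.+1.
  by rewrite size_prod_XsubC [index_enum _]unlock -enumT size_enum_ord.
have al0 : al != 0.
  by apply/eqP => al0; move: sT; rewrite eT1 al0 scale0r subr0 size_poly1; lia.
pose A u v (z : 'I_m -> R) := ('X - u%:P) * ('X - v%:P) * (\prod_(j < m) ('X - (z j)%:P)) ^+ 2.
have mA u v z : A u v z \is monic.
  by apply: rpredM; [apply: rpredM; exact: monicXsubC | exact: monic_exp].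
have sA u v z : size (A u v z) = (m + m).+3 := size_lin2_sqr u v (mprod z) (sprod z).
have ident : A c d x - A a b y = (2 / al)%:P.
  by apply: (monic_difference_const (mA _ _ _) (mA _ _ _) _ _ al0 (etrans (esym eT1) eT2));
    rewrite !sA.
have C0 : 2 / al != 0 by rewrite mulf_neq0 ?invr_eq0 ?pnatr_eq0.
split; first exact: FF_det_neq0 (mprod x) (sprod x) (mprod y) (sprod y) C0 ident.
exact: Fpoly_eq (mprod x) (sprod x) (mprod y) (sprod y) C0 ident.
Qed.
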